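(* Let $k$ be an algebraically closed field of characteristic zero, $n\ge2$, $q\in k$ a primitive $2n$-th root of unity. Let $\mathfrak wH_{4n}^*$ be the algebra generated by $G,X$ with relations $G^{2n+1}=G$, $GX=-XG$, $X^2=1-G^2$, with comultiplication $\Delta(G)=G\otimes G$, $\Delta(X)=X\otimes1+G\otimes X$ (tensor products of modules are formed via $\Delta$). Define the following modules: for $s\in\{0,n\}$, $M[1,s]$ is $1$-dimensional with basis $v_s$, $Xv_s=0$, $Gv_s=(-1)^{s/n}v_s$; $M[2,s]$ is $2$-dimensional with basis $v_1^s,v_2^s$, $Xv_1^s=v_2^s$, $Xv_2^s=0$, $Gv_1^s=(-1)^{s/n}v_1^s$, $Gv_2^s=(-1)^{s/n+1}v_2^s$; for an integer $j$ with $n\nmid j$, $P_j$ is $2$-dimensional with basis $p_1^j,p_2^j$, $Xp_1^j=p_2^j$, $Xp_2^j=(1-q^{2j})p_1^j$, $Gp_1^j=q^jp_1^j$, $Gp_2^j=-q^jp_2^j$; for $i\in\{0,1\}$, $N_i$ is $1$-dimensional with basis $w_i$, $Gw_i=0$, $Xw_i=(-1)^iw_i$; $M_0$ is $2$-dimensional with basis $m_0,m_1$, $Xm_0=m_1$, $Xm_1=m_0$, $G$ acting by $0$. Then the following isomorphisms of $\mathfrak wH_{4n}^*$-modules hold: (1) for $1\le i,j\le n-1$: $P_i\otimes P_j\cong M[2,0]\oplus M[2,n]$ if $n\mid i+j$, and $P_i\otimes P_j\cong P_{i+j}\oplus P_{i+j}$ if $n\nmid i+j$; (2) for $k\in\{1,2\}$,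 $s\in\{0,n\}$, $1\le j\le n-1$: $M[k,s]\otimes P_j\cong P_j^{\oplus k}\cong P_j\otimes M[k,s]$; (3) for $k,l\in\{1,2\}$, $s,j\in\{0,n\}$: $M[k,s]\otimes M[l,j]\cong M[2,0]\oplus M[2,n]$ if $k+l=4$, and $M[k,s]\otimes M[l,j]\cong M[k+l-1,\,s+j \bmod 2n]$ if $k+l<4$; (4) for $i,j\in\{0,1\}$: $N_i\otimes N_j\cong N_i$; (5) for $k\in\{1,2\}$, $s\in\{0,n\}$, $j\in\{0,1\}$: $M[1,s]\otimes N_j\cong N_{j+s/n \bmod 2}$ and $M[2,s]\otimes N_j\cong M_0$; (6) for $k\in\{1,2\}$, $s\in\{0,n\}$, $j\in\{0,1\}$: $N_j\otimes M[k,s]\cong N_j^{\oplus k}$; (7) for $i\in\{0,1\}$, $1\le j\le n-1$: $N_i\otimes P_j\cong N_i\oplus N_i$ and $P_j\otimes N_i\cong M_0$; (8) for $i\in\{0,1\}$: $N_i\otimes M_0\cong N_i\oplus N_i$ and $M_0\otimes N_i\cong M_0$; (9) $M_0\otimes M_0\cong M_0\oplus M_0$; (10) for $k\in\{1,2\}$, $s\in\{0,n\}$: $M_0\otimes M[k,s]\cong M_0^{\oplus k}\cong M[k,s]\otimes M_0$; (11) for $1\le j\le n-1$: $M_0\otimes P_j\cong M_0\oplus M_0\cong P_j\otimes M_0$.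
   Context: The paper lists the indecomposable modules $P_j$ only for $1\le j\le n-1$; in item (1), $P_{i+j}$ with $n<i+j$ is the module defined by the same formula (equivalently, isomorphic to $P_{i+j-n}$). *)

From HB Require Import structures.
From mathcomp Require Import all_boot all_order all_algebra.
From mathcomp Require Import mxtens.
Set Implicit Arguments. Unset Strict Implicit. Unset Printing Implicit Defensive.
Import Order.TTheory GRing.Theory.
Local Open Scope ring_scope.

(* A finite-dimensional module over wH_{4n}^*, given by the matrices of the
   generators G and X acting on column vectors of F^wdim (column j of a
   matrix is the image of the j-th basis vector). *)
Record wHmod (F : fieldType) := WHMod {
  wdim : nat;
  wG : 'M[F]_wdim;
  wX : 'M[F]_wdim }.

(* Tensor product via Delta(G) = G (x) G, Delta(X) = X (x) 1 + G (x) X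
   (Kronecker products). *)
Definition wtens (F : fieldType) (M N : wHmod F) : wHmod F :=
  @WHMod F (wdim M * wdim N)
    (tensmx (wG M) (wG N))
    (tensmx (wX M) (1%:M : 'M[F]_(wdim N)) + tensmx (wG M) (wX N)).

Definition wsum (F : fieldType) (M N : wHmod F) : wHmod F :=
  @WHMod F (wdim M + wdim N)
    (block_mx (wG M) 0 0 (wG N))
    (block_mx (wX M) 0 0 (wX N)).

Definition wzero (F : fieldType) : wHmod F := @WHMod F 0 0 0.

Definition wpow (F : fieldType) (M : wHmod F) (k : nat) : wHmod F :=
  iter k (wsum M) (wzero F).

Definition wiso (F : fieldType) (M N : wHmod F) : Prop :=
  exists P : 'M[F]_(wdim N, wdim M),
    [/\ row_free P && row_full P,
        P *m wG M = wG N *m P &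
        P *m wX M = wX N *m P].

Definition mx2 (F : fieldType) (a b c d : F) : 'M[F]_2 :=
  \matrix_(i < 2, j < 2)
    if i == 0 :> nat then (if j == 0 :> nat then a else b)
    else (if j == 0 :> nat then c else d).

Definition mod1 (F : fieldType) (g x : F) : wHmod F :=
  @WHMod F 1 (g%:M) (x%:M).
Definition mod2 (F : fieldType) (G X : 'M[F]_2) : wHmod F := @WHMod F 2 G X.

Section Modules.
Variables (F : fieldType) (n : nat) (q : F).

Definition sgn (s : nat) : F := (-1) ^+ (s %/ n).

Definition M1 (s : nat) : wHmod F := mod1 (sgn s) 0.
Definition M2 (s : nat) : wHmod F :=
  mod2 (mx2 (sgn s) 0 0 (- sgn s)) (mx2 0 0 1 0).
Definition Mks (k s : nat) : wHmod F := if k == 1%N then M1 s else M2 s.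
Definition Pj (j : nat) : wHmod F :=
  mod2 (mx2 (q ^+ j) 0 0 (- q ^+ j)) (mx2 0 (1 - q ^+ (2 * j)) 1 0).
Definition Ni (i : nat) : wHmod F := mod1 0 ((-1) ^+ i).
Definition M0 : wHmod F := mod2 0 (mx2 0 1 1 0).
End Modules.

From HB Require Import structures.
From mathcomp Require Import all_boot all_order all_algebra.
From mathcomp Require Import mxtens.
From mathcomp Require Import ring zify.
Set Implicit Arguments. Unset Strict Implicit. Unset Printing Implicit Defensive.
Import GRing.Theory.
Local Open Scope ring_scope.

(* All modules involved have dimension at most 2, so each isomorphism is given
   by an explicit invertible intertwining matrix of size at most 4.  The
   modules depend on their indices only through one scalar: the G-eigenvalue
   a = q^j of P_j (with 1 - a^2 <> 0 because n does not divide j), the sign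
   (-1)^(s/n) of M[k,s] and the X-eigenvalue (-1)^i of N_i.  So every
   isomorphism is proved for these one-parameter families; the only input from
   q is q^n = -1, which gives q^i q^j = -1 when i + j = n. *)

Section Isomorphism.
Variable F : fieldType.
Implicit Types M N : wHmod F.

Lemma intertwiner_wiso M N (P : 'M[F]_(wdim N, wdim M)) (Q : 'M[F]_(wdim M, wdim N)) :
  P *m Q = 1%:M -> Q *m P = 1%:M ->
  P *m wG M = wG N *m P -> P *m wX M = wX N *m P -> wiso M N.
Proof.
move=> PQ QP PG PX; exists P; split=> //.
by apply/andP; split; [apply/row_freeP; exists Q | apply/row_fullP; exists Q].
Qed.

Lemma wiso_sym M N : wiso M N -> wiso N M.
Proof.
case=> P [/andP [/row_freeP [Q PQ] /row_fullP [Q' Q'P]] PG PX].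
have eqQ : Q' = Q by rewrite -[Q']mulmx1 -PQ mulmxA Q'P mul1mx.
have {Q' Q'P eqQ}QP : Q *m P = 1%:M by rewrite -eqQ.
have Q_intertwines A B : P *m A = B *m P -> Q *m B = A *m Q.
  by move=> PAB; rewrite -[LHS]mulmx1 -PQ !mulmxA -(mulmxA Q) -PAB mulmxA QP mul1mx.
by apply: (@intertwiner_wiso N M Q P QP PQ); apply: Q_intertwines.
Qed.

End Isomorphism.

(* Matrices are given by functions of nat indices: once the dimensions are
   numerals, every entry of a product, Kronecker product or block matrix of
   such matrices reduces to a closed field expression. *)
Section EntrywiseMatrices.
Variable F : fieldType.

Definition mxfun m n (f : nat -> nat -> F) : 'M[F]_(m, n) := \matrix_(i < m, j < n) f i j.
Definition mxrows (rows : seq (seq F)) (i j : nat) : F := (nth [::] rows i)`_j.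
Definition mxid (i j : nat) : F := (i == j)%:R.
Definition mxswap12 : nat -> nat -> F :=
  mxrows [:: [:: 1; 0; 0; 0]; [:: 0; 0; 1; 0]; [:: 0; 1; 0; 0]; [:: 0; 0; 0; 1]].

Lemma eq_mxfun m n f g :
  (forall i, (i < m)%N -> forall j, (j < n)%N -> f i j = g i j) -> mxfun m n f = mxfun m n g.
Proof. by move=> fg; apply/matrixP => i j; rewrite !mxE fg. Qed.

Lemma mx2_mxfun (a b c d : F) :
  mx2 a b c d = mxfun 2 2 (fun i j => if i == 0%N then (if j == 0%N then a else b)
                                      else (if j == 0%N then c else d)).
Proof. by []. Qed.

Lemma scalar_mxfun m (a : F) : a%:M = mxfun m m (fun i j => a *+ (i == j)).
Proof. by apply/matrixP => i j; rewrite !mxE. Qed.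

Lemma zero_mxfun m n : 0 = mxfun m n (fun _ _ => 0).
Proof. by apply/matrixP => i j; rewrite !mxE. Qed.

Lemma add_mxfun m n f g : mxfun m n f + mxfun m n g = mxfun m n (fun i j => f i j + g i j).
Proof. by apply/matrixP => i j; rewrite !mxE. Qed.

Lemma mul_mxfun m n p f g :
  mxfun m n f *m mxfun n p g = mxfun m p (fun i j => \sum_(0 <= k < n) f i k * g k j).
Proof. by apply/matrixP => i j; rewrite !mxE big_mkord; apply: eq_bigr => k _; rewrite !mxE. Qed.

Lemma tensmx_mxfun m n p r f g :
  tensmx (mxfun m n f) (mxfun p r g) =
  mxfun (m * p) (n * r) (fun i j => f (i %/ p)%N (j %/ r)%N * g (i %% p)%N (j %% r)%N).
Proof. by apply/matrixP => i j; rewrite !mxE. Qed.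

Lemma block_mxfun m1 m2 n1 n2 a b c d :
  block_mx (mxfun m1 n1 a) (mxfun m1 n2 b) (mxfun m2 n1 c) (mxfun m2 n2 d) =
  mxfun (m1 + m2) (n1 + n2) (fun i j =>
    if (i < m1)%N then (if (j < n1)%N then a i j else b i (j - n1)%N)
    else (if (j < n1)%N then c (i - m1)%N j else d (i - m1)%N (j - n1)%N)).
Proof.
apply/matrixP => i j; rewrite -(splitK i) -(splitK j).
case: (split i) => i'; case: (split j) => j' /=;
  rewrite ?block_mxEul ?block_mxEur ?block_mxEdl ?block_mxEdr !mxE /= ?ltn_ord;
  by rewrite ?(ltnNge (m1 + _)%N) ?(ltnNge (n1 + _)%N) ?leq_addr //= ?addKn.
Qed.

End EntrywiseMatrices.

Arguments mxid {F}.
Arguments mxswap12 {F}.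

Ltac is_value v := lazymatch v with O => idtac | S _ => idtac | true => idtac | false => idtac end.

Ltac eval_closed t := let v := eval vm_compute in t in is_value v; change t with v.

Ltac eval_closed_nat :=
  repeat match goal with
  | |- context [(?x %/ ?y)%N] => eval_closed (x %/ y)%N
  | |- context [(?x %% ?y)%N] => eval_closed (x %% y)%N
  | |- context [(?x - ?y)%N] => eval_closed (x - y)%N
  | |- context [(?x + ?y)%N] => eval_closed (x + y)%N
  | |- context [(?x * ?y)%N] => eval_closed (x * y)%N
  | |- context [(?x <= ?y)%N] => eval_closed (x <= y)%N
  end.

Ltac case_index :=
  let i := fresh "i" in let Hi := fresh "Hi" in
  move=> i Hi; case: i Hi => [|[|[|[|i]]]] Hi; try by exfalso; lia.

Ltac split_signs :=
  repeat match goal with sign : _ = 1 \/ _ = -1 |- _ => case: sign => -> end.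

Ltac solve_entrywise :=
  repeat match goal with D := _ |- _ => subst D end;
  rewrite /= ?mx2_mxfun ?scalar_mxfun ?zero_mxfun;
  repeat progress (eval_closed_nat; rewrite ?tensmx_mxfun ?add_mxfun ?mul_mxfun ?block_mxfun);
  apply: eq_mxfun; case_index; case_index;
  rewrite unlock /mxswap12 /mxrows /mxid /=; eval_closed_nat; rewrite /=;
  first [ring | by field | split_signs; ring].

Tactic Notation "intertwine" uconstr(P) uconstr(Q) :=
  lazymatch goal with |- @wiso ?F _ _ =>
    refine (@intertwiner_wiso F _ _ (@mxfun F _ _ P) (@mxfun F _ _ Q) _ _ _ _) end;
  solve_entrywise.

Section TensorProducts.
Variable F : fieldType.
Implicit Types a b s t e : F.

Definition Pmod a : wHmod F := mod2 (mx2 a 0 0 (- a)) (mx2 0 (1 - a ^+ 2) 1 0).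
Definition M1mod s : wHmod F := mod1 s 0.
Definition M2mod s : wHmod F := mod2 (mx2 s 0 0 (- s)) (mx2 0 0 1 0).
Definition Nmod e : wHmod F := mod1 0 e.

Lemma wiso_tens_Pmod a b : 1 - (a * b) ^+ 2 != 0 ->
  wiso (wtens (Pmod a) (Pmod b)) (wsum (Pmod (a * b)) (Pmod (a * b))).
Proof.
move=> D_neq0; pose D := 1 - (a * b) ^+ 2.
by intertwine
  (mxrows [:: [:: 1; 0; 0; 0]; [:: 0; a * (1 - b ^+ 2) / D; (1 - a ^+ 2) / D; 0];
              [:: 0; 0; 0; 1]; [:: 0; 1 / D; - a / D; 0]])
  (mxrows [:: [:: 1; 0; 0; 0]; [:: 0; a; 0; 1 - a ^+ 2];
              [:: 0; 1; 0; - a * (1 - b ^+ 2)]; [:: 0; 0; 1; 0]]).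
Qed.

Lemma wiso_tens_Pmod_M2sum a b : a * b = -1 ->
  wiso (wtens (Pmod a) (Pmod b)) (wsum (M2mod 1) (M2mod (-1))).
Proof.
move=> ab; have a0 : a != 0.
  by apply: contra_eq_neq ab => ->; rewrite mul0r eq_sym oppr_eq0 oner_eq0.
have -> : b = - a^-1 by rewrite -[b]mul1r -(mulVf a0) -mulrA ab mulrN1.
pose c := a * (1 - a ^- 2).
by intertwine
  (mxrows [:: [:: 0; 1; - a; 0]; [:: 0; 0; 0; 1]; [:: 1; 0; 0; - c]; [:: 0; 0; 1; 0]])
  (mxrows [:: [:: 0; c; 1; 0]; [:: 1; 0; 0; a]; [:: 0; 0; 0; 1]; [:: 0; 1; 0; 0]]).
Qed.

Lemma wiso_tens_M1mod_Pmod s a : s = 1 \/ s = -1 -> 1 - a ^+ 2 != 0 ->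
  wiso (wtens (M1mod s) (Pmod a)) (wpow (Pmod a) 1).
Proof.
move=> [] -> D_neq0; first by intertwine mxid mxid.
pose D := 1 - a ^+ 2.
by intertwine (mxrows [:: [:: 0; 1]; [:: - 1 / D; 0]]) (mxrows [:: [:: 0; - D]; [:: 1; 0]]).
Qed.

Lemma wiso_tens_Pmod_M1mod s a : s = 1 \/ s = -1 -> 1 - a ^+ 2 != 0 ->
  wiso (wtens (Pmod a) (M1mod s)) (wpow (Pmod a) 1).
Proof.
move=> [] -> D_neq0; first by intertwine mxid mxid.
pose D := 1 - a ^+ 2.
by intertwine (mxrows [:: [:: 0; 1]; [:: 1 / D; 0]]) (mxrows [:: [:: 0; D]; [:: 1; 0]]).
Qed.

Lemma wiso_tens_M2mod_Pmod s a : s = 1 \/ s = -1 -> 1 - a ^+ 2 != 0 ->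
  wiso (wtens (M2mod s) (Pmod a)) (wpow (Pmod a) 2).
Proof.
move=> [] -> D_neq0; pose D := 1 - a ^+ 2.
  by intertwine
    (mxrows [:: [:: 1; 0; 0; 0]; [:: 0; 1; 0; 0]; [:: 0; 0; 0; 1]; [:: 0; 1 / D; - 1 / D; 0]])
    (mxrows [:: [:: 1; 0; 0; 0]; [:: 0; 1; 0; 0]; [:: 0; 1; 0; - D]; [:: 0; 0; 1; 0]]).
by intertwine
  (mxrows [:: [:: 0; 1; 0; 0]; [:: - 1 / D; 0; 0; 0]; [:: 0; 0; 1; 0]; [:: 1 / D; 0; 0; 1]])
  (mxrows [:: [:: 0; - D; 0; 0]; [:: 1; 0; 0; 0]; [:: 0; 0; 1; 0]; [:: 0; 1; 0; 1]]).
Qed.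

Lemma wiso_tens_Pmod_M2mod s a : s = 1 \/ s = -1 -> 1 - a ^+ 2 != 0 ->
  wiso (wtens (Pmod a) (M2mod s)) (wpow (Pmod a) 2).
Proof.
move=> [] -> D_neq0; pose D := 1 - a ^+ 2.
  by intertwine
    (mxrows [:: [:: 1; 0; 0; 0]; [:: 0; 0; 1; 0]; [:: 0; 0; 0; 1]; [:: 0; 1 / D; - a / D; 0]])
    (mxrows [:: [:: 1; 0; 0; 0]; [:: 0; a; 0; D]; [:: 0; 1; 0; 0]; [:: 0; 0; 1; 0]]).
by intertwine
  (mxrows [:: [:: 0; 1; 0; 0]; [:: a / D; 0; 0; 1]; [:: 0; 0; 1; 0]; [:: 1 / D; 0; 0; 0]])
  (mxrows [:: [:: 0; 0; 0; D]; [:: 1; 0; 0; 0]; [:: 0; 0; 1; 0]; [:: 0; 1; 0; - a]]).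
Qed.

Lemma wiso_tens_M2mod_M2mod s t : s = 1 \/ s = -1 -> t = 1 \/ t = -1 ->
  wiso (wtens (M2mod s) (M2mod t)) (wsum (M2mod 1) (M2mod (-1))).
Proof.
have same r : r = 1 \/ r = -1 -> wiso (wtens (M2mod r) (M2mod r)) (wsum (M2mod 1) (M2mod (-1))).
  by move=> hr; intertwine
    (mxrows [:: [:: 1; 0; 0; 0]; [:: 0; 0; 1; 0]; [:: 0; 1; - r; 0]; [:: 0; 0; 0; 1]])
    (mxrows [:: [:: 1; 0; 0; 0]; [:: 0; r; 1; 0]; [:: 0; 1; 0; 0]; [:: 0; 0; 0; 1]]).
have opp r r' : r = 1 \/ r = -1 -> r' = - r ->
    wiso (wtens (M2mod r) (M2mod r')) (wsum (M2mod 1) (M2mod (-1))).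
  by move=> hr ->; intertwine
    (mxrows [:: [:: 0; 1; - r; 0]; [:: 0; 0; 0; 1]; [:: 1; 0; 0; 0]; [:: 0; 0; 1; 0]])
    (mxrows [:: [:: 0; 0; 1; 0]; [:: 1; 0; 0; r]; [:: 0; 0; 0; 1]; [:: 0; 1; 0; 0]]).
case=> -> [] ->.
- by apply: same; left.
- by apply: opp => //; left.
- by apply: opp; [right | rewrite opprK].
- by apply: same; right.
Qed.

Lemma wiso_tens_M1mod_M1mod s t : wiso (wtens (M1mod s) (M1mod t)) (M1mod (s * t)).
Proof. by intertwine mxid mxid. Qed.

Lemma wiso_tens_M1mod_M2mod s t : s = 1 \/ s = -1 ->
  wiso (wtens (M1mod s) (M2mod t)) (M2mod (s * t)).
Proof.
by move=> hs; intertwine (mxrows [:: [:: 1; 0]; [:: 0; s]]) (mxrows [:: [:: 1; 0]; [:: 0; s]]).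
Qed.

Lemma wiso_tens_M2mod_M1mod s t : wiso (wtens (M2mod s) (M1mod t)) (M2mod (s * t)).
Proof. by intertwine mxid mxid. Qed.

Lemma wiso_tens_Nmod_Nmod e d : wiso (wtens (Nmod e) (Nmod d)) (Nmod e).
Proof. by intertwine mxid mxid. Qed.

Lemma wiso_tens_M1mod_Nmod s e : wiso (wtens (M1mod s) (Nmod e)) (Nmod (e * s)).
Proof. by intertwine mxid mxid. Qed.

Lemma wiso_tens_M2mod_Nmod s e : s = 1 \/ s = -1 -> e = 1 \/ e = -1 ->
  wiso (wtens (M2mod s) (Nmod e)) (M0 F).
Proof.
by move=> hs he;
  intertwine (mxrows [:: [:: 1; - (s * e)]; [:: 0; 1]]) (mxrows [:: [:: 1; s * e]; [:: 0; 1]]).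
Qed.

Lemma wiso_tens_Nmod_M1mod e s : wiso (wtens (Nmod e) (M1mod s)) (wpow (Nmod e) 1).
Proof. by intertwine mxid mxid. Qed.

Lemma wiso_tens_Nmod_M2mod e s : wiso (wtens (Nmod e) (M2mod s)) (wpow (Nmod e) 2).
Proof. by intertwine mxid mxid. Qed.

Lemma wiso_tens_Nmod_Pmod e a : wiso (wtens (Nmod e) (Pmod a)) (wsum (Nmod e) (Nmod e)).
Proof. by intertwine mxid mxid. Qed.

Lemma wiso_tens_Pmod_Nmod a e : e = 1 \/ e = -1 -> wiso (wtens (Pmod a) (Nmod e)) (M0 F).
Proof.
by move=> he;
  intertwine (mxrows [:: [:: 1; - (e * a)]; [:: 0; 1]]) (mxrows [:: [:: 1; e * a]; [:: 0; 1]]).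
Qed.

Lemma wiso_tens_Nmod_M0 e : wiso (wtens (Nmod e) (M0 F)) (wsum (Nmod e) (Nmod e)).
Proof. by intertwine mxid mxid. Qed.

Lemma wiso_tens_M0_Nmod e : wiso (wtens (M0 F) (Nmod e)) (M0 F).
Proof. by intertwine mxid mxid. Qed.

Lemma wiso_tens_M0_M0 : wiso (wtens (M0 F) (M0 F)) (wsum (M0 F) (M0 F)).
Proof. by intertwine mxswap12 mxswap12. Qed.

Lemma wiso_tens_M0_M1mod s : wiso (wtens (M0 F) (M1mod s)) (wpow (M0 F) 1).
Proof. by intertwine mxid mxid. Qed.

Lemma wiso_tens_M0_M2mod s : wiso (wtens (M0 F) (M2mod s)) (wpow (M0 F) 2).
Proof. by intertwine mxswap12 mxswap12. Qed.

Lemma wiso_tens_M1mod_M0 s : s = 1 \/ s = -1 -> wiso (wtens (M1mod s) (M0 F)) (wpow (M0 F) 1).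
Proof.
by move=> hs; intertwine (mxrows [:: [:: 1; 0]; [:: 0; s]]) (mxrows [:: [:: 1; 0]; [:: 0; s]]).
Qed.

Lemma wiso_tens_M2mod_M0 s : s = 1 \/ s = -1 -> wiso (wtens (M2mod s) (M0 F)) (wpow (M0 F) 2).
Proof.
by move=> hs; intertwine
  (mxrows [:: [:: 1; 0; 0; 0]; [:: 0; s; 0; 0]; [:: 0; - s; 1; 0]; [:: 0; 0; 0; - s]])
  (mxrows [:: [:: 1; 0; 0; 0]; [:: 0; s; 0; 0]; [:: 0; 1; 1; 0]; [:: 0; 0; 0; - s]]).
Qed.

Lemma wiso_tens_M0_Pmod a : wiso (wtens (M0 F) (Pmod a)) (wsum (M0 F) (M0 F)).
Proof. by intertwine mxswap12 mxswap12. Qed.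

Lemma wiso_tens_Pmod_M0 a : wiso (wtens (Pmod a) (M0 F)) (wsum (M0 F) (M0 F)).
Proof.
by intertwine
  (mxrows [:: [:: 1; 0; 0; - a]; [:: 0; 0; 1; 0]; [:: 0; 1; - a; 0]; [:: 0; 0; 0; 1]])
  (mxrows [:: [:: 1; 0; 0; a]; [:: 0; a; 1; 0]; [:: 0; 1; 0; 0]; [:: 0; 0; 0; 1]]).
Qed.

End TensorProducts.

Lemma signr_pm1 (R : idomainType) (i : nat) : (-1) ^+ i = 1 :> R \/ (-1) ^+ i = -1 :> R.
Proof. by rewrite -signr_odd; case: (odd i); [right; rewrite expr1 | left]. Qed.

Section RootOfUnity.
Variables (F : fieldType) (n : nat) (q : F).
Hypotheses (n_gt0 : (0 < n)%N) (q_prim : (2 * n).-primitive_root q).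

Lemma prim_expr_half : q ^+ n = -1.
Proof.
have /eqP : (q ^+ n) ^+ 2 = 1 by rewrite -exprM mulnC (prim_expr_order q_prim).
rewrite sqrf_eq1 => /orP [/eqP qn1 | /eqP //].
have : (2 * n %| n)%N by rewrite (prim_order_dvd q_prim) qn1.
by rewrite gtnNdvd //; lia.
Qed.

Lemma prim_expr_sqr_neq1 m : ~~ (n %| m)%N -> 1 - (q ^+ m) ^+ 2 != 0.
Proof.
move=> ndvd; rewrite subr_eq0 eq_sym -exprM -(prim_order_dvd q_prim) (mulnC m 2).
by rewrite dvdn_pmul2l.
Qed.

Lemma Pj_Pmod j : Pj q j = Pmod (q ^+ j).
Proof. by rewrite /Pj /Pmod mulnC exprM. Qed.

End RootOfUnity.

Section Signs.
Variables (F : fieldType) (n : nat).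
Hypothesis n_gt0 : (0 < n)%N.

Lemma sgn0 : sgn F n 0 = 1.
Proof. by rewrite /sgn div0n. Qed.

Lemma sgnn : sgn F n n = -1.
Proof. by rewrite /sgn divnn n_gt0. Qed.

Lemma sgn_addmod s t : (s == 0%N) || (s == n) -> (t == 0%N) || (t == n) ->
  sgn F n ((s + t) %% (2 * n)) = sgn F n s * sgn F n t.
Proof.
move=> /orP [] /eqP -> /orP [] /eqP ->; rewrite ?sgn0 ?sgnn ?mul1r ?mulr1.
- by rewrite mod0n sgn0.
- by rewrite modn_small ?sgnn //; lia.
- by rewrite addn0 modn_small ?sgnn //; lia.
- by rewrite addnn -mul2n modnn sgn0 mulrNN mulr1.
Qed.

End Signs.

Theorem theorem5p3 (F : closedFieldType) (hchar : [pchar F] =i pred0)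
  (n : nat) (hn : (2 <= n)%N) (q : F) (hq : (2 * n).-primitive_root q) :
  (* (1) *)
  (forall i j : nat, (1 <= i <= n - 1)%N -> (1 <= j <= n - 1)%N ->
     (n %| i + j)%N ->
     wiso (wtens (Pj q i) (Pj q j)) (wsum (M2 F n 0) (M2 F n n))) /\
  (forall i j : nat, (1 <= i <= n - 1)%N -> (1 <= j <= n - 1)%N ->
     ~~ (n %| i + j)%N ->
     wiso (wtens (Pj q i) (Pj q j)) (wsum (Pj q (i + j)) (Pj q (i + j)))) /\
  (* (2) *)
  (forall k s j : nat, (k == 1%N) || (k == 2%N) -> (s == 0%N) || (s == n) ->
     (1 <= j <= n - 1)%N ->
     wiso (wtens (Mks F n k s) (Pj q j)) (wpow (Pj q j) k) /\
     wiso (wpow (Pj q j) k) (wtens (Pj q j) (Mks F n k s))) /\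
  (* (3) *)
  (forall k l s j : nat, (k == 1%N) || (k == 2%N) -> (l == 1%N) || (l == 2%N) ->
     (s == 0%N) || (s == n) -> (j == 0%N) || (j == n) ->
     (k + l = 4)%N ->
     wiso (wtens (Mks F n k s) (Mks F n l j)) (wsum (M2 F n 0) (M2 F n n))) /\
  (forall k l s j : nat, (k == 1%N) || (k == 2%N) -> (l == 1%N) || (l == 2%N) ->
     (s == 0%N) || (s == n) -> (j == 0%N) || (j == n) ->
     (k + l < 4)%N ->
     wiso (wtens (Mks F n k s) (Mks F n l j))
          (Mks F n (k + l - 1) ((s + j) %% (2 * n)))) /\
  (* (4) *)
  (forall i j : nat, (i <= 1)%N -> (j <= 1)%N ->
     wiso (wtens (Ni F i) (Ni F j)) (Ni F i)) /\
  (* (5) *)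
  (forall s j : nat, (s == 0%N) || (s == n) -> (j <= 1)%N ->
     wiso (wtens (M1 F n s) (Ni F j)) (Ni F ((j + s %/ n) %% 2)) /\
     wiso (wtens (M2 F n s) (Ni F j)) (M0 F)) /\
  (* (6) *)
  (forall k s j : nat, (k == 1%N) || (k == 2%N) -> (s == 0%N) || (s == n) ->
     (j <= 1)%N ->
     wiso (wtens (Ni F j) (Mks F n k s)) (wpow (Ni F j) k)) /\
  (* (7) *)
  (forall i j : nat, (i <= 1)%N -> (1 <= j <= n - 1)%N ->
     wiso (wtens (Ni F i) (Pj q j)) (wsum (Ni F i) (Ni F i)) /\
     wiso (wtens (Pj q j) (Ni F i)) (M0 F)) /\
  (* (8) *)
  (forall i : nat, (i <= 1)%N ->
     wiso (wtens (Ni F i) (M0 F)) (wsum (Ni F i) (Ni F i)) /\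
     wiso (wtens (M0 F) (Ni F i)) (M0 F)) /\
  (* (9) *)
  wiso (wtens (M0 F) (M0 F)) (wsum (M0 F) (M0 F)) /\
  (* (10) *)
  (forall k s : nat, (k == 1%N) || (k == 2%N) -> (s == 0%N) || (s == n) ->
     wiso (wtens (M0 F) (Mks F n k s)) (wpow (M0 F) k) /\
     wiso (wpow (M0 F) k) (wtens (Mks F n k s) (M0 F))) /\
  (* (11) *)
  (forall j : nat, (1 <= j <= n - 1)%N ->
     wiso (wtens (M0 F) (Pj q j)) (wsum (M0 F) (M0 F)) /\
     wiso (wsum (M0 F) (M0 F)) (wtens (Pj q j) (M0 F))).
Proof.
have n_gt0 : (0 < n)%N by lia.
have sgn_pm1 s : sgn F n s = 1 \/ sgn F n s = -1 by apply: signr_pm1.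
have Ni_pm1 i : (-1) ^+ i = 1 :> F \/ (-1) ^+ i = -1 :> F by apply: signr_pm1.
have Pj_reg j : (1 <= j <= n - 1)%N -> 1 - (q ^+ j) ^+ 2 != 0.
  by move=> hj; apply: (prim_expr_sqr_neq1 hq); rewrite gtnNdvd //; lia.
repeat match goal with |- _ /\ _ => split end.
- move=> i j hi hj /dvdnP [[|[|k]] sum_ij]; try lia.
  rewrite !Pj_Pmod /M2 sgn0 sgnn //; apply: wiso_tens_Pmod_M2sum.
  by rewrite -exprD sum_ij mul1n (prim_expr_half n_gt0 hq).
- move=> i j hi hj hij; rewrite !Pj_Pmod exprD; apply: wiso_tens_Pmod.
  by rewrite -exprD; apply: (prim_expr_sqr_neq1 hq).
- move=> k s j /orP [] /eqP -> _ /Pj_reg a_reg; rewrite Pj_Pmod.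
  + by split; [apply: wiso_tens_M1mod_Pmod | apply/wiso_sym/wiso_tens_Pmod_M1mod].
  + by split; [apply: wiso_tens_M2mod_Pmod | apply/wiso_sym/wiso_tens_Pmod_M2mod].
- move=> k l s t /orP [] /eqP -> /orP [] /eqP -> //= _ _ _.
  by rewrite /M2 sgn0 ?sgnn //; apply: wiso_tens_M2mod_M2mod.
- move=> k l s t /orP [] /eqP -> /orP [] /eqP -> //= hs ht _;
    rewrite /Mks /M1 /M2 sgn_addmod //.
  + exact: wiso_tens_M1mod_M1mod.
  + exact: wiso_tens_M1mod_M2mod.
  + exact: wiso_tens_M2mod_M1mod.
- by move=> i j _ _; apply: wiso_tens_Nmod_Nmod.
- move=> s j _ _; split; last exact: wiso_tens_M2mod_Nmod.
  by rewrite /Ni modn2 signr_odd exprD; apply: wiso_tens_M1mod_Nmod.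
- by move=> k s j /orP [] /eqP -> _ _; [apply: wiso_tens_Nmod_M1mod | apply: wiso_tens_Nmod_M2mod].
- move=> i j _ _; rewrite Pj_Pmod.
  by split; [apply: wiso_tens_Nmod_Pmod | apply: wiso_tens_Pmod_Nmod].
- by move=> i _; split; [apply: wiso_tens_Nmod_M0 | apply: wiso_tens_M0_Nmod].
- exact: wiso_tens_M0_M0.
- move=> k s /orP [] /eqP -> _.
  + by split; [apply: wiso_tens_M0_M1mod | apply/wiso_sym/wiso_tens_M1mod_M0].
  + by split; [apply: wiso_tens_M0_M2mod | apply/wiso_sym/wiso_tens_M2mod_M0].
- move=> j _; rewrite Pj_Pmod.
  by split; [apply: wiso_tens_M0_Pmod | apply/wiso_sym/wiso_tens_Pmod_M0].
Qed.
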